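(* Let $p,q$ be relatively prime positive integers, $k\ge1$ an integer and $\mu\in\mathbb{C}$. Let $\mathcal{F}_1$ be the real one-dimensional singular foliation on a disc $\{y\in\mathbb{C}:|y|<r\}$ defined by the real $1$-form $$\omega_1=\mathrm{Re}\left\{\left(\frac{\mu q}{y}+\frac{q}{y^{qk+1}}\right)\mathrm{d}y\right\}$$ (equivalently, by the real flow of the vector field $X=i\,\frac{y^{qk+1}}{1+\mu y^{qk}}\frac{\partial}{\partial y}$). Then, if $r>0$ is small enough, there exists a $C^\infty$ submersion $f:\{0<|y|<r\}\to\mathbb{R}$ such that (1) $f$ is a first integral of $\mathcal{F}_1$, and (2) $f(y)=g(y^{qk})$ for some $C^\infty$ submersion $g$.
   Context: $\mathcal{F}_1$ is the restriction to the section $\{(1,y)\}$ of the real analytic foliation defined by $\mathrm{Re}(\tau)$, where $\tau=(\mu-1)p\frac{\mathrm{d}x}{x}+\mu q\frac{\mathrm{d}y}{y}-\mathrm{d}\left(\frac{1}{k(x^py^q)^k}\right)$. A first integral of a foliation is a function constant along its leaves. *)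

From Stdlib Require Import Reals Arith.
From Coquelicot Require Import Coquelicot.
Open Scope R_scope.

Definition punct_disc (r : R) (y : C) : Prop := 0 < Cmod y < r.

Definition d1 (F : C -> R) : C -> R := fun y => Derive (fun t => F (t, snd y)) (fst y).
Definition d2 (F : C -> R) : C -> R := fun y => Derive (fun t => F (fst y, t)) (snd y).

Fixpoint Ck (n : nat) (U : C -> Prop) (F : C -> R) : Prop :=
  match n with
  | O => forall y, U y -> continuous F y
  | S m => (forall y, U y -> continuous F y) /\
           (forall y, U y -> ex_derive (fun t => F (t, snd y)) (fst y)
                          /\ ex_derive (fun t => F (fst y, t)) (snd y)) /\
           Ck m U (d1 F) /\ Ck m U (d2 F)
  end.

Definition smooth_on (U : C -> Prop) (F : C -> R) : Prop := forall n, Ck n U F.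

Definition submersion_on (U : C -> Prop) (F : C -> R) : Prop :=
  smooth_on U F /\ forall y, U y -> (d1 F y, d2 F y) <> (0, 0).

Definition omega1 (q k : nat) (mu : C) (y v : C) : R :=
  Re ((mu * INR q / y + INR q / Cpow y (q * k + 1)) * v)%C.

Definition first_integral (U : C -> Prop) (omega : C -> C -> R) (F : C -> R) : Prop :=
  forall (a b : R) (g1 g2 : R -> R), a <= b ->
    (forall t, a <= t <= b ->
       U (g1 t, g2 t) /\ ex_derive g1 t /\ ex_derive g2 t /\
       omega (g1 t, g2 t) (Derive g1 t, Derive g2 t) = 0) ->
    F (g1 a, g2 a) = F (g1 b, g2 b).

(* Write w = y^(qk).  Then omega1 = -(1/k) Re (H'(w) dw) for the multivalued holomorphic
   function H(w) = 1/w - mu log w, so Re H = Re (1/w) - Re mu ln|w| + Im mu arg w is a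
   multivalued first integral whose branches differ by multiples of 2 pi Im mu.  In thin
   sectors around the real axis near 0 the term Re (1/w) dominates: Re H exceeds any given
   M near the positive axis and is below -M near the negative one.  On the upper half-plane
   we therefore compose Re H with a smooth map of derivative >= 1/2 which is the identity on
   [M, oo) and the translation by -2 pi Im mu on (-oo, -M].  This matches the branch used on
   the lower half-plane along both half-axes, and yields a single-valued submersion g whose
   level sets contain the leaves; f = g(y^(qk)). *)

From Stdlib Require Import Reals Lra Lia.
From Coquelicot Require Import Coquelicot.
Open Scope R_scope.

(** * The classes [Ck] *)

Lemma Ck_S_Ck n U F : Ck (S n) U F -> Ck n U F.
Proof.
  revert U F; induction n as [|n IH]; intros U F [Hc [Hd [H1 H2]]]; [exact Hc|].
  split; [exact Hc|split; [exact Hd|split; auto]].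
Qed.

Lemma Ck_continuous n U F y : Ck n U F -> U y -> continuous F y.
Proof. destruct n; [intros H; exact (H y)| intros H; exact (proj1 H y)]. Qed.

Lemma Ck_subset n (U V : C -> Prop) F : (forall y, V y -> U y) -> Ck n U F -> Ck n V F.
Proof.
  revert U V F; induction n as [|n IH]; intros U V F HVU H; [intros y Hy; auto|].
  destruct H as [Hc [Hd [H1 H2]]].
  split; [|split; [|split; eauto]]; intros y Hy; [apply Hc|apply Hd]; auto.
Qed.

Lemma Ck_local n (U : C -> Prop) F :
  (forall y, U y -> exists V : C -> Prop, V y /\ Ck n V F) -> Ck n U F.
Proof.
  revert U F; induction n as [|n IH]; intros U F H.
  - intros y Hy. destruct (H y Hy) as [V [Vy HV]]. exact (HV y Vy).
  - split; [|split; [|split]].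
    + intros y Hy. destruct (H y Hy) as [V [Vy HV]]. exact (proj1 HV y Vy).
    + intros y Hy. destruct (H y Hy) as [V [Vy HV]]. exact (proj1 (proj2 HV) y Vy).
    + apply IH. intros y Hy. destruct (H y Hy) as [V [Vy HV]]. exists V; split; [exact Vy|apply HV].
    + apply IH. intros y Hy. destruct (H y Hy) as [V [Vy HV]]. exists V; split; [exact Vy|apply HV].
Qed.

Lemma locally_fst_slice (V : C -> Prop) (y : C) :
  locally y V -> locally (fst y) (fun t => V (t, snd y)).
Proof.
  destruct y as [y1 y2]; intros H.
  apply (locally_2d_1d_const_y (fun u v => V (u, v))), locally_2d_locally.
  revert H; apply filter_imp; intros [u v]; auto.
Qed.

Lemma locally_snd_slice (V : C -> Prop) (y : C) :
  locally y V -> locally (snd y) (fun t => V (fst y, t)).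
Proof.
  destruct y as [y1 y2]; intros H.
  apply (locally_2d_1d_const_x (fun u v => V (u, v))), locally_2d_locally.
  revert H; apply filter_imp; intros [u v]; auto.
Qed.

Lemma Ck_ext n (U : C -> Prop) F G :
  open U -> (forall y, U y -> F y = G y) -> Ck n U G -> Ck n U F.
Proof.
  revert F G; induction n as [|n IH]; intros F G HU Heq HG.
  - intros y Hy. apply (continuous_ext_loc _ G); [|exact (HG y Hy)].
    generalize (HU y Hy); apply filter_imp; intros z Hz; symmetry; auto.
  - destruct HG as [Hc [Hd [H1 H2]]]. split; [|split; [|split]].
    + intros y Hy. apply (continuous_ext_loc _ G); [|exact (Hc y Hy)].
      generalize (HU y Hy); apply filter_imp; intros z Hz; symmetry; auto.
    + intros y Hy. destruct (Hd y Hy) as [D1 D2]. split.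
      * apply (ex_derive_ext_loc (fun t => G (t, snd y))); [|exact D1].
        generalize (locally_fst_slice _ _ (HU y Hy)); apply filter_imp; intros t Ht; symmetry; auto.
      * apply (ex_derive_ext_loc (fun t => G (fst y, t))); [|exact D2].
        generalize (locally_snd_slice _ _ (HU y Hy)); apply filter_imp; intros t Ht; symmetry; auto.
    + apply (IH _ (d1 G) HU); [|exact H1]. intros y Hy; apply Derive_ext_loc.
      generalize (locally_fst_slice _ _ (HU y Hy)); apply filter_imp; auto.
    + apply (IH _ (d2 G) HU); [|exact H2]. intros y Hy; apply Derive_ext_loc.
      generalize (locally_snd_slice _ _ (HU y Hy)); apply filter_imp; auto.
Qed.

Lemma Ck_const n U c : open U -> Ck n U (fun _ => c).
Proof.
  revert c; induction n as [|n IH]; intros c HU; [intros y _; apply continuous_const|].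
  split; [intros y _; apply continuous_const|]. split; [intros y _; split; apply ex_derive_const|].
  split; apply (Ck_ext _ _ _ (fun _ => 0)); auto; intros y _; unfold d1, d2; simpl; apply Derive_const.
Qed.

Lemma Ck_fst n U : open U -> Ck n U fst.
Proof.
  intros HU; destruct n as [|n]; [intros [y1 y2] _; apply continuous_fst|].
  split; [intros [y1 y2] _; apply continuous_fst|].
  split; [intros y _; simpl; split; [apply ex_derive_id|apply ex_derive_const]|].
  split; [apply (Ck_ext _ _ _ (fun _ => 1))|apply (Ck_ext _ _ _ (fun _ => 0))];
    auto using Ck_const; intros y _; unfold d1, d2; simpl; [apply Derive_id|apply Derive_const].
Qed.

Lemma Ck_snd n U : open U -> Ck n U snd.
Proof.
  intros HU; destruct n as [|n]; [intros [y1 y2] _; apply continuous_snd|].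
  split; [intros [y1 y2] _; apply continuous_snd|].
  split; [intros y _; simpl; split; [apply ex_derive_const|apply ex_derive_id]|].
  split; [apply (Ck_ext _ _ _ (fun _ => 0))|apply (Ck_ext _ _ _ (fun _ => 1))];
    auto using Ck_const; intros y _; unfold d1, d2; simpl; [apply Derive_const|apply Derive_id].
Qed.

Lemma Ck_plus n U F G : open U -> Ck n U F -> Ck n U G -> Ck n U (fun y => F y + G y).
Proof.
  revert F G; induction n as [|n IH]; intros F G HU HF HG.
  - intros y Hy. apply (continuous_plus F G); auto.
  - destruct HF as [Fc [Fd [F1 F2]]], HG as [Gc [Gd [G1 G2]]].
    split; [intros y Hy; apply (continuous_plus F G); auto|]. split.
    + intros y Hy. destruct (Fd y Hy), (Gd y Hy).
      split; [apply (ex_derive_plus (fun t => F (t, snd y)) (fun t => G (t, snd y)))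
             |apply (ex_derive_plus (fun t => F (fst y, t)) (fun t => G (fst y, t)))]; auto.
    + split; [apply (Ck_ext _ _ _ (fun y => d1 F y + d1 G y))
             |apply (Ck_ext _ _ _ (fun y => d2 F y + d2 G y))]; auto;
      intros y Hy; destruct (Fd y Hy), (Gd y Hy); unfold d1, d2; apply Derive_plus; auto.
Qed.

Lemma Ck_mult n U F G : open U -> Ck n U F -> Ck n U G -> Ck n U (fun y => F y * G y).
Proof.
  revert F G; induction n as [|n IH]; intros F G HU HF HG.
  - intros y Hy. apply (continuous_mult F G); auto.
  - pose proof (Ck_S_Ck _ _ _ HF) as HF'. pose proof (Ck_S_Ck _ _ _ HG) as HG'.
    destruct HF as [Fc [Fd [F1 F2]]], HG as [Gc [Gd [G1 G2]]].
    split; [intros y Hy; apply (continuous_mult F G); auto|]. split.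
    + intros y Hy. destruct (Fd y Hy), (Gd y Hy).
      split; [apply (ex_derive_mult (fun t => F (t, snd y)) (fun t => G (t, snd y)))
             |apply (ex_derive_mult (fun t => F (fst y, t)) (fun t => G (fst y, t)))]; auto.
    + split; [apply (Ck_ext _ _ _ (fun y => d1 F y * G y + F y * d1 G y))
             |apply (Ck_ext _ _ _ (fun y => d2 F y * G y + F y * d2 G y))];
      auto using Ck_plus;
      intros [y1 y2] Hy; destruct (Fd _ Hy), (Gd _ Hy); unfold d1, d2; apply Derive_mult; auto.
Qed.

Lemma Ck_scal n U c F : open U -> Ck n U F -> Ck n U (fun y => c * F y).
Proof. intros HU HF. apply Ck_mult; auto using Ck_const. Qed.

Lemma Ck_opp n U F : open U -> Ck n U F -> Ck n U (fun y => - F y).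
Proof.
  intros HU HF. apply (Ck_ext _ _ _ (fun y => -1 * F y)); auto using Ck_scal.
  intros y _; ring.
Qed.

Lemma Ck_minus n U F G : open U -> Ck n U F -> Ck n U G -> Ck n U (fun y => F y - G y).
Proof. intros HU HF HG. apply Ck_plus; auto using Ck_opp. Qed.

Lemma Ck_comp_0 U F (phi : R -> R) :
  Ck 0 U F -> (forall y, U y -> ex_derive phi (F y)) -> Ck 0 U (fun y => phi (F y)).
Proof.
  intros HF Hd y Hy. apply (continuous_comp F phi); auto.
  apply (ex_derive_continuous (K := R_AbsRing) (V := R_NormedModule)); auto.
Qed.

Lemma Ck_comp_S n U F (phi phi' : R -> R) : open U -> Ck (S n) U F ->
  (forall y, U y -> is_derive phi (F y) (phi' (F y))) -> Ck n U (fun y => phi' (F y)) ->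
  Ck (S n) U (fun y => phi (F y)).
Proof.
  intros HU HF Hd Hp. pose proof (Ck_S_Ck _ _ _ HF) as HF'.
  assert (Hex : forall y, U y -> ex_derive phi (F y)) by (intros y Hy; eexists; eauto).
  destruct HF as [Fc [Fd [F1 F2]]].
  split; [intros y Hy; exact (Ck_comp_0 U F phi Fc Hex y Hy)|].
  split.
  - intros [y1 y2] Hy. destruct (Fd _ Hy). simpl in *.
    split; apply (ex_derive_comp (K := R_AbsRing) (V := R_NormedModule)); auto.
  - split; [apply (Ck_ext _ _ _ (fun y => d1 F y * phi' (F y)))
           |apply (Ck_ext _ _ _ (fun y => d2 F y * phi' (F y)))]; auto using Ck_mult;
    intros [y1 y2] Hy; destruct (Fd _ Hy); unfold d1, d2; simpl in *;
    rewrite Derive_comp, (is_derive_unique _ _ _ (Hd _ Hy)); auto.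
Qed.

Lemma Ck_inv n U F : open U -> Ck n U F -> (forall y, U y -> F y <> 0) -> Ck n U (fun y => / F y).
Proof.
  revert F; induction n as [|n IH]; intros F HU HF Hnz.
  - apply Ck_comp_0; auto. intros y Hy. auto_derive. auto.
  - apply (Ck_comp_S _ _ _ _ (fun x => - (/ x * / x))); auto.
    + intros y Hy. auto_derive; [auto|]. field. auto.
    + apply Ck_opp, Ck_mult; auto using Ck_S_Ck.
Qed.

Lemma Ck_ln n U F : open U -> Ck n U F -> (forall y, U y -> 0 < F y) -> Ck n U (fun y => ln (F y)).
Proof.
  intros HU HF Hp. assert (Hnz : forall y, U y -> F y <> 0) by (intros y Hy; specialize (Hp y Hy); lra).
  destruct n as [|n].
  - apply Ck_comp_0; auto. intros y Hy. auto_derive. auto.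
  - apply (Ck_comp_S _ _ _ _ (fun x => / x)); auto using Ck_inv, Ck_S_Ck.
    intros y Hy. auto_derive; [auto|]. field. auto.
Qed.

Lemma Ck_atan n U F : open U -> Ck n U F -> Ck n U (fun y => atan (F y)).
Proof.
  intros HU HF. destruct n as [|n].
  - apply Ck_comp_0; auto. intros y Hy. auto_derive. auto.
  - apply (Ck_comp_S _ _ _ _ (fun x => / (1 + x * x))); auto.
    + intros y Hy. auto_derive; [auto|]. field. nra.
    + apply Ck_inv; auto using Ck_S_Ck, Ck_plus, Ck_const, Ck_mult.
      intros y _. nra.
Qed.

(** * A flat function and a smooth monotone transition *)

Lemma exp_le_mono x y : x <= y -> exp x <= exp y.
Proof. intros [H|H]; [apply Rlt_le, exp_increasing; exact H|rewrite H; lra]. Qed.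

Lemma exp_pow x n : exp x ^ n = exp (INR n * x).
Proof.
  induction n as [|n IH]; [simpl; rewrite Rmult_0_l, exp_0; reflexivity|].
  rewrite <- tech_pow_Rmult, IH, <- exp_plus, S_INR. f_equal. ring.
Qed.

Definition flat (m : nat) (x : R) : R := if Rlt_dec 0 x then (/ x) ^ m * exp (- / x) else 0.

Lemma flat_pos m x : 0 < x -> flat m x = (/ x) ^ m * exp (- / x).
Proof. intros Hx. unfold flat. destruct (Rlt_dec 0 x); [reflexivity|lra]. Qed.

Lemma flat_nonpos m x : x <= 0 -> flat m x = 0.
Proof. intros Hx. unfold flat. destruct (Rlt_dec 0 x); [lra|reflexivity]. Qed.

Lemma flat_ge0 m x : 0 <= flat m x.
Proof.
  unfold flat. destruct (Rlt_dec 0 x); [|lra].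
  apply Rmult_le_pos; [apply pow_le, Rlt_le, Rinv_0_lt_compat; lra|apply Rlt_le, exp_pos].
Qed.

(* From [exp (y / c) >= y / c] raised to the power [c = m + 2]. *)
Lemma pow_mul_exp_neg_le m y :
  0 < y -> y ^ S m * exp (- y) <= INR (S (S m)) ^ S (S m) / y.
Proof.
  intros Hy. set (c := INR (S (S m))).
  assert (Hc : 0 < c) by (apply lt_0_INR; lia).
  assert (Hyc : 0 <= y / c) by (apply Rlt_le, Rdiv_lt_0_compat; auto).
  assert (He : (y / c) ^ S (S m) <= exp y).
  { replace (exp y) with (exp (y / c) ^ S (S m)) by (rewrite exp_pow; f_equal; fold c; field; lra).
    apply pow_incr. pose proof (exp_ineq1_le (y / c)). lra. }
  rewrite exp_Ropp. pose proof (exp_pos y).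
  apply (Rmult_le_reg_r (exp y * y)); [nra|].
  replace (y ^ S m * / exp y * (exp y * y)) with (c ^ S (S m) * (y / c) ^ S (S m))
    by (unfold Rdiv; rewrite Rpow_mult_distr, pow_inv; simpl; field;
        repeat split; try apply pow_nonzero; lra).
  replace (c ^ S (S m) / y * (exp y * y)) with (c ^ S (S m) * exp y) by (field; lra).
  apply Rmult_le_compat_l; [apply pow_le; lra|exact He].
Qed.

Lemma is_derive_flat_0 m : is_derive (flat m) 0 0.
Proof.
  apply is_derive_Reals. intros eps Heps.
  set (c := INR (S (S m)) ^ S (S m)).
  assert (Hc : 0 < c) by (apply pow_lt, lt_0_INR; lia).
  exists (mkposreal (eps / c) (Rdiv_lt_0_compat _ _ Heps Hc)); simpl.
  intros h Hh Hhd. rewrite Rplus_0_l, (flat_nonpos m 0) by lra.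
  destruct (Rlt_dec 0 h) as [Hp|Hp].
  - rewrite flat_pos by exact Hp.
    pose proof (pow_mul_exp_neg_le m (/ h) (Rinv_0_lt_compat _ Hp)) as B.
    fold c in B. unfold Rdiv in B. rewrite Rinv_inv in B.
    replace (((/ h) ^ m * exp (- / h) - 0) / h - 0) with ((/ h) ^ S m * exp (- / h))
      by (simpl; field; lra).
    rewrite Rabs_pos_eq by (apply Rmult_le_pos; [apply pow_le, Rlt_le, Rinv_0_lt_compat; lra
                                                 |apply Rlt_le, exp_pos]).
    rewrite Rabs_pos_eq in Hhd by lra.
    apply (Rle_lt_trans _ _ _ B).
    apply (Rmult_lt_compat_l c) in Hhd; [|exact Hc].
    replace (c * (eps / c)) with eps in Hhd by (field; lra). lra.
  - rewrite flat_nonpos by lra. replace ((0 - 0) / h - 0) with 0 by (field; auto).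
    rewrite Rabs_R0. exact Heps.
Qed.

Lemma is_derive_flat m x : is_derive (flat m) x (flat (S (S m)) x - INR m * flat (S m) x).
Proof.
  destruct (Rlt_dec 0 x) as [Hx|Hx]; [|destruct (Rlt_dec x 0) as [Hx'|Hx']].
  - rewrite !flat_pos by exact Hx.
    apply (is_derive_ext_loc (fun t => (/ t) ^ m * exp (- / t))).
    { generalize (open_gt 0 x Hx). apply filter_imp. intros t Ht. rewrite flat_pos; auto. }
    auto_derive; [lra|].
    destruct m as [|m]; [simpl; field; lra|]. rewrite S_INR. simpl pow. field. lra.
  - rewrite !flat_nonpos by lra. replace (0 - INR m * 0) with 0 by ring.
    apply (is_derive_ext_loc (fun _ => 0)); [|apply is_derive_Reals, derivable_pt_lim_const].
    generalize (open_lt 0 x Hx'). apply filter_imp. intros t Ht. rewrite flat_nonpos; lra.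
  - replace x with 0 by lra. rewrite !flat_nonpos by lra. replace (0 - INR m * 0) with 0 by ring.
    apply is_derive_flat_0.
Qed.

Lemma Ck_flat n m U F : open U -> Ck n U F -> Ck n U (fun y => flat m (F y)).
Proof.
  revert m; induction n as [|n IH]; intros m HU HF.
  - apply Ck_comp_0; auto. intros y _. eexists; apply is_derive_flat.
  - apply (Ck_comp_S _ _ _ _ (fun x => flat (S (S m)) x - INR m * flat (S m) x)); auto.
    + intros y _; apply is_derive_flat.
    + apply Ck_minus; auto using Ck_scal, Ck_S_Ck.
Qed.

Lemma flat0_le1 z : flat 0 z <= 1.
Proof.
  destruct (Rlt_dec 0 z) as [Hz|Hz]; [|rewrite flat_nonpos; lra].
  rewrite flat_pos, pow_O, Rmult_1_l, <- exp_0 by exact Hz.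
  pose proof (Rinv_0_lt_compat z Hz). apply exp_le_mono. lra.
Qed.

Lemma flat0_ge z : 1 <= z -> exp (-1) <= flat 0 z.
Proof.
  intros Hz. rewrite flat_pos, pow_O, Rmult_1_l by lra. apply exp_le_mono.
  assert (/ z <= 1) by (rewrite <- Rinv_1; apply Rinv_le_contravar; lra). lra.
Qed.

(* [(y / 2) ^ 2 <= exp (y / 2) ^ 2 = exp y] with [y = / z]. *)
Lemma flat2_le4 z : flat 2 z <= 4.
Proof.
  destruct (Rlt_dec 0 z) as [Hz|Hz]; [|rewrite flat_nonpos; lra].
  rewrite flat_pos by exact Hz. set (y := / z).
  assert (Hy : 0 < y) by (apply Rinv_0_lt_compat; auto).
  assert (H1 : y / 2 <= exp (y / 2)) by (pose proof (exp_ineq1_le (y / 2)); lra).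
  assert (H2 : exp y = exp (y / 2) ^ 2) by (rewrite exp_pow; f_equal; simpl; field).
  assert (H3 : (y / 2) ^ 2 <= exp (y / 2) ^ 2) by (apply pow_incr; lra).
  rewrite exp_Ropp. pose proof (exp_pos y).
  apply (Rmult_le_reg_r (exp y)); auto. rewrite Rmult_assoc, Rinv_l by lra. nra.
Qed.

Definition step (x : R) : R := flat 0 (1 - x) / (flat 0 (1 - x) + flat 0 (1 + x)).

Lemma step_denom_ge x : exp (-1) <= flat 0 (1 - x) + flat 0 (1 + x).
Proof.
  pose proof (flat_ge0 0 (1 - x)). pose proof (flat_ge0 0 (1 + x)).
  destruct (Rle_dec x 0); [pose proof (flat0_ge (1 - x))|pose proof (flat0_ge (1 + x))]; lra.
Qed.

Lemma step_ge1 x : 1 <= x -> step x = 0.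
Proof. intros Hx. unfold step. rewrite (flat_nonpos 0 (1 - x)) by lra. unfold Rdiv. ring. Qed.

Lemma step_le_m1 x : x <= -1 -> step x = 1.
Proof.
  intros Hx. unfold step. rewrite (flat_nonpos 0 (1 + x)), Rplus_0_r by lra.
  pose proof (flat0_ge (1 - x)). pose proof (exp_pos (-1)). field. lra.
Qed.

Lemma is_derive_flat0 z : is_derive (flat 0) z (flat 2 z).
Proof.
  replace (flat 2 z) with (flat 2 z - INR 0 * flat 1 z) by (simpl; ring). apply is_derive_flat.
Qed.

Lemma step_derive x : exists d, is_derive step x d /\ Rabs d <= 8 * exp 2.
Proof.
  set (f := flat 0 (1 - x)). set (g := flat 0 (1 + x)).
  set (A := flat 2 (1 - x)). set (B := flat 2 (1 + x)).
  assert (DA : is_derive (fun t => flat 0 (1 - t)) x (-1 * A)).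
  { apply (is_derive_comp (flat 0) (fun t => 1 - t)); [apply is_derive_flat0|auto_derive; auto; ring]. }
  assert (DB : is_derive (fun t => flat 0 (1 + t)) x (1 * B)).
  { apply (is_derive_comp (flat 0) (fun t => 1 + t)); [apply is_derive_flat0|auto_derive; auto; ring]. }
  pose proof (step_denom_ge x) as Hg. fold f g in Hg. pose proof (exp_pos (-1)).
  exists ((-1 * A * (f + g) - f * (-1 * A + 1 * B)) / (f + g) ^ 2). split.
  - apply (is_derive_div (fun t => flat 0 (1 - t)) (fun t => flat 0 (1 - t) + flat 0 (1 + t)));
      [exact DA|apply (is_derive_plus (fun t => flat 0 (1 - t)) (fun t => flat 0 (1 + t))); auto|].
    fold f g. lra.
  - assert (0 <= f <= 1 /\ 0 <= g <= 1) as [Ef Eg]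
      by (split; split; [apply flat_ge0|apply flat0_le1|apply flat_ge0|apply flat0_le1]).
    assert (0 <= A <= 4 /\ 0 <= B <= 4) as [EA EB]
      by (split; split; [apply flat_ge0|apply flat2_le4|apply flat_ge0|apply flat2_le4]).
    assert (Hn : Rabs (-1 * A * (f + g) - f * (-1 * A + 1 * B)) <= 8) by (apply Rabs_le; split; nra).
    assert (Hexp : exp (-1) ^ 2 * exp 2 = 1)
      by (rewrite exp_pow, <- exp_plus, <- exp_0; f_equal; simpl; ring).
    assert (Hg2 : exp (-1) ^ 2 <= (f + g) ^ 2) by (apply pow_incr; lra).
    assert (Hgp : 0 < (f + g) ^ 2) by (apply pow_lt; lra).
    unfold Rdiv. rewrite Rabs_mult, (Rabs_pos_eq (/ _)) by (apply Rlt_le, Rinv_0_lt_compat; auto).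
    apply (Rmult_le_reg_r ((f + g) ^ 2)); auto. rewrite Rmult_assoc, Rinv_l by lra.
    pose proof (exp_pos 2). nra.
Qed.

Lemma Ck_step n U F : open U -> Ck n U F -> Ck n U (fun y => step (F y)).
Proof.
  intros HU HF. unfold step, Rdiv.
  assert (H1 : Ck n U (fun y => 1 - F y)) by auto using Ck_minus, Ck_const.
  assert (H2 : Ck n U (fun y => 1 + F y)) by auto using Ck_plus, Ck_const.
  apply Ck_mult; auto using Ck_flat.
  apply Ck_inv; auto using Ck_plus, Ck_flat.
  intros y _. pose proof (step_denom_ge (F y)). pose proof (exp_pos (-1)). lra.
Qed.

Definition slide_radius (c : R) : R := 2 * Rabs c * (8 * exp 2) + 1.

Definition slide (c x : R) : R := x - c * step (x / slide_radius c).

Lemma slide_radius_ge1 c : 1 <= slide_radius c.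
Proof.
  unfold slide_radius. pose proof (Rabs_pos c). pose proof (exp_pos 2).
  assert (0 <= Rabs c * exp 2) by (apply Rmult_le_pos; lra). lra.
Qed.

Lemma slide_right c x : slide_radius c <= x -> slide c x = x.
Proof.
  intros Hx. pose proof (slide_radius_ge1 c). unfold slide.
  rewrite step_ge1; [ring|]. apply (Rmult_le_reg_r (slide_radius c)); [lra|].
  field_simplify; lra.
Qed.

Lemma slide_left c x : x <= - slide_radius c -> slide c x = x - c.
Proof.
  intros Hx. pose proof (slide_radius_ge1 c). unfold slide.
  rewrite step_le_m1; [ring|]. apply (Rmult_le_reg_r (slide_radius c)); [lra|].
  field_simplify; lra.
Qed.

Lemma slide_derive c x : exists d, is_derive (slide c) x d /\ 1 / 2 <= d.
Proof.
  set (M := slide_radius c). pose proof (slide_radius_ge1 c) as HM. fold M in HM.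
  destruct (step_derive (x / M)) as [d [Hd Hb]].
  exists (1 - c * (/ M * d)). split.
  - apply (is_derive_minus (fun t => t) (fun t => c * step (t / M))).
    + apply is_derive_Reals, derivable_pt_lim_id.
    + apply (is_derive_scal (fun t => step (t / M))).
      apply (is_derive_comp step (fun t => t / M)); [exact Hd|].
      auto_derive; auto. field. lra.
  - assert (Hcd : Rabs (c * (/ M * d)) <= 1 / 2).
    { rewrite !Rabs_mult, (Rabs_pos_eq (/ M)) by (apply Rlt_le, Rinv_0_lt_compat; lra).
      assert (Rabs c * Rabs d <= Rabs c * (8 * exp 2))
        by (apply Rmult_le_compat_l; auto using Rabs_pos).
      apply (Rmult_le_reg_r M); [lra|].
      replace (Rabs c * (/ M * Rabs d) * M) with (Rabs c * Rabs d) by (field; lra).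
      unfold M, slide_radius. lra. }
    apply Rabs_le_between in Hcd. lra.
Qed.

Lemma Ck_slide n c U F : open U -> Ck n U F -> Ck n U (fun y => slide c (F y)).
Proof.
  intros HU HF. pose proof (slide_radius_ge1 c).
  apply Ck_minus, Ck_scal, Ck_step; auto.
  apply (Ck_ext _ _ _ (fun y => / slide_radius c * F y)); auto using Ck_scal.
  intros y _. unfold Rdiv. ring.
Qed.

(** * Open subsets of the punctured plane *)

Lemma continuous_pair {T : UniformSpace} (f g : T -> R) x :
  continuous f x -> continuous g x -> continuous (fun t => (f t, g t) : C) x.
Proof.
  intros Hf Hg. apply (continuous_comp_2 f g (fun a b => (a, b))); auto.
  intros P [e He]. exists e. intros [u v] Huv. exact (He _ Huv).
Qed.

Lemma open_preimage_pair (U W : C -> Prop) (F1 F2 : C -> R) :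
  open U -> open W -> (forall y, U y -> continuous F1 y) -> (forall y, U y -> continuous F2 y) ->
  open (fun y => U y /\ W (F1 y, F2 y)).
Proof.
  intros HU HW H1 H2 y [Uy Wy]. apply filter_and; [exact (HU y Uy)|].
  exact (continuous_pair F1 F2 y (H1 y Uy) (H2 y Uy) W (HW _ Wy)).
Qed.

Lemma locally_path (W : C -> Prop) (p1 p2 : R -> R) t e1 e2 :
  is_derive p1 t e1 -> is_derive p2 t e2 -> open W -> W (p1 t, p2 t) ->
  locally t (fun s => W (p1 s, p2 s)).
Proof.
  intros H1 H2 HW Wt. apply (continuous_pair p1 p2 t); [| |exact (HW _ Wt)];
    apply (ex_derive_continuous (K := R_AbsRing) (V := R_NormedModule)); eexists; eauto.
Qed.

Lemma open_pos (h : C -> R) : Ck 0 (fun _ => True) h -> open (fun w => 0 < h w).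
Proof. intros Hh w Hw. apply (Ck_continuous 0 _ h w Hh I). exact (open_gt 0 _ Hw). Qed.

Lemma open_affine_pos a b c : open (fun w : C => 0 < a * fst w + b * snd w + c).
Proof. apply open_pos; auto 6 using open_true, Ck_plus, Ck_scal, Ck_fst, Ck_snd, Ck_const. Qed.

Lemma punct_disc_iff rho y : 0 < rho ->
  punct_disc rho y <-> 0 < fst y ^ 2 + snd y ^ 2 < rho ^ 2.
Proof.
  intros Hrho. unfold punct_disc, Cmod. set (s := fst y ^ 2 + snd y ^ 2).
  assert (Hs : 0 <= s)
    by (unfold s; pose proof (pow2_ge_0 (fst y)); pose proof (pow2_ge_0 (snd y)); lra).
  split.
  - intros [A B]. split.
    + destruct (Req_dec s 0) as [E|E]; [rewrite E, sqrt_0 in A|]; lra.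
    + pose proof (sqrt_sqrt s Hs). pose proof (sqrt_pos s). simpl. nra.
  - intros [A B]. split; [apply sqrt_lt_R0; auto|].
    rewrite <- (sqrt_pow2 rho) by lra. apply sqrt_lt_1_alt. lra.
Qed.

Lemma open_punct_disc rho : 0 < rho -> open (punct_disc rho).
Proof.
  intros Hrho.
  assert (Hs : Ck 0 (fun _ => True) (fun w : C => fst w * fst w + snd w * snd w))
    by auto using open_true, Ck_plus, Ck_mult, Ck_fst, Ck_snd.
  apply (open_ext (fun w => 0 < fst w * fst w + snd w * snd w
                            /\ 0 < rho ^ 2 - (fst w * fst w + snd w * snd w))).
  - intros w. rewrite punct_disc_iff by exact Hrho. simpl. split; intros [A B]; split; nra.
  - apply open_and; apply open_pos; auto using open_true, Ck_minus, Ck_const.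
Qed.

Definition lower_half (w : C) : Prop := snd w < 0.
Definition upper_half (w : C) : Prop := 0 < snd w.
Definition right_sector (rho : R) (w : C) : Prop := Rabs (snd w) < fst w < rho.
Definition left_sector (rho : R) (w : C) : Prop := Rabs (snd w) < - fst w < rho.

Lemma open_lower_half : open lower_half.
Proof.
  apply (open_ext (fun w : C => 0 < 0 * fst w + -1 * snd w + 0)); [|apply open_affine_pos].
  intros w. unfold lower_half. split; lra.
Qed.

Lemma open_upper_half : open upper_half.
Proof.
  apply (open_ext (fun w : C => 0 < 0 * fst w + 1 * snd w + 0)); [|apply open_affine_pos].
  intros w. unfold upper_half. split; lra.
Qed.

Lemma open_sector rho s : open (fun w : C => Rabs (snd w) < s * fst w < rho).
Proof.
  apply (open_ext (fun w : C => (0 < s * fst w + -1 * snd w + 0 /\ 0 < s * fst w + 1 * snd w + 0)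
                                /\ 0 < - s * fst w + 0 * snd w + rho)).
  - intros w. split; [intros [[A B] D]; split; [apply Rabs_def1|]; lra
                     |intros [A B]; apply Rabs_def2 in A; lra].
  - repeat apply open_and; apply open_affine_pos.
Qed.

Lemma open_right_sector rho : open (right_sector rho).
Proof.
  apply (open_ext (fun w : C => Rabs (snd w) < 1 * fst w < rho)); [|apply open_sector].
  intros w. unfold right_sector. rewrite Rmult_1_l. tauto.
Qed.

Lemma open_left_sector rho : open (left_sector rho).
Proof.
  apply (open_ext (fun w : C => Rabs (snd w) < -1 * fst w < rho)); [|apply open_sector].
  intros w. unfold left_sector. replace (-1 * fst w) with (- fst w) by ring. tauto.
Qed.

Lemma real_axis_in_sectors rho w : punct_disc rho w -> snd w = 0 ->
  right_sector rho w \/ left_sector rho w.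
Proof.
  destruct w as [u v]; unfold punct_disc, right_sector, left_sector; cbn [fst snd].
  intros [H0 H1] ->. change (u, 0) with (RtoC u) in H0, H1. rewrite Cmod_R in H0, H1. rewrite Rabs_R0.
  destruct (Rle_dec 0 u); [left; rewrite Rabs_pos_eq in H0, H1 by lra
                          |right; rewrite Rabs_left in H0, H1 by lra]; lra.
Qed.

(** * Branches of [Re (1/w - mu log w)] *)

(* With w = (u, v): [chart_h mu c] and [chart_v mu c] are [Re (1/w - mu log w)] for the
   branches [c + atan (v/u)] and [c - atan (u/v)] of [arg w]; [prim0] is the part free of
   [arg w]. *)
Definition prim0 (mu w : C) : R :=
  fst w / (fst w ^ 2 + snd w ^ 2) - Re mu / 2 * ln (fst w ^ 2 + snd w ^ 2).

Definition chart_h (mu : C) (c : R) (w : C) : R := prim0 mu w + Im mu * (c + atan (snd w / fst w)).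
Definition chart_v (mu : C) (c : R) (w : C) : R := prim0 mu w + Im mu * (c - atan (fst w / snd w)).

Definition glued (mu w : C) : R :=
  if Rlt_dec (snd w) 0 then chart_v mu (- (PI / 2)) w
  else if Rlt_dec 0 (snd w) then slide (2 * PI * Im mu) (chart_v mu (PI / 2) w)
  else if Rlt_dec 0 (fst w) then chart_h mu 0 w else chart_h mu (- PI) w.

Lemma chart_v_same_sign mu c w : 0 < fst w * snd w -> chart_v mu c w = chart_h mu (c - PI / 2) w.
Proof.
  destruct w as [u v]; simpl; intros Huv. unfold chart_v, chart_h; simpl.
  assert (Hu : u <> 0) by (intros ->; lra). assert (Hv : v <> 0) by (intros ->; lra).
  replace (u / v) with (/ (v / u)) by (field; auto).
  rewrite atan_inv; [ring|]. replace (v / u) with (u * v / (u * u)) by (field; auto).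
  apply Rdiv_lt_0_compat; [lra|]. nra.
Qed.

Lemma chart_v_opp_sign mu c w : fst w * snd w < 0 -> chart_v mu c w = chart_h mu (c + PI / 2) w.
Proof.
  destruct w as [u v]; simpl; intros Huv. unfold chart_v, chart_h; simpl.
  assert (Hu : u <> 0) by (intros ->; lra). assert (Hv : v <> 0) by (intros ->; lra).
  replace (u / v) with (- / (- (v / u))) by (field; auto).
  rewrite atan_opp, atan_inv, atan_opp; [ring|].
  replace (- (v / u)) with (- (u * v) / (u * u)) by (field; auto).
  apply Rdiv_lt_0_compat; [lra|]. nra.
Qed.

Lemma glued_lower mu w : lower_half w -> glued mu w = chart_v mu (- (PI / 2)) w.
Proof. intros Hw. unfold glued. destruct (Rlt_dec (snd w) 0); [reflexivity|contradiction]. Qed.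

Lemma glued_upper mu w : upper_half w -> glued mu w = slide (2 * PI * Im mu) (chart_v mu (PI / 2) w).
Proof.
  intros Hw. unfold glued, upper_half in *.
  destruct (Rlt_dec (snd w) 0); [lra|]. destruct (Rlt_dec 0 (snd w)); [reflexivity|contradiction].
Qed.

(* The derivative of [1/w - mu log w]. *)
Definition dprim (mu w : C) : C := (- (1 + mu * w) / (w * w))%C.

Lemma sum_sq_pos_l u v : u <> 0 -> 0 < u ^ 2 + v ^ 2.
Proof. intros Hu. pose proof (pow2_gt_0 u Hu). pose proof (pow2_ge_0 v). lra. Qed.

Lemma sum_sq_pos_r u v : v <> 0 -> 0 < u ^ 2 + v ^ 2.
Proof. intros Hv. pose proof (pow2_ge_0 u). pose proof (pow2_gt_0 v Hv). lra. Qed.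

Section PathDerivative.
Variables (p1 p2 : R -> R) (t e1 e2 : R).
Hypothesis H1 : is_derive p1 t e1.
Hypothesis H2 : is_derive p2 t e2.
Let Dp1 : Derive (fun s => p1 s) t = e1 := is_derive_unique (fun s => p1 s) t e1 H1.
Let Dp2 : Derive (fun s => p2 s) t = e2 := is_derive_unique (fun s => p2 s) t e2 H2.

Lemma dprim_Re mu : p1 t ^ 2 + p2 t ^ 2 <> 0 ->
  Re (dprim mu (p1 t, p2 t) * (e1, e2)) =
  ((p2 t ^ 2 - p1 t ^ 2) * e1 - 2 * p1 t * p2 t * e2) / (p1 t ^ 2 + p2 t ^ 2) ^ 2
  - (Re mu * (p1 t * e1 + p2 t * e2) + Im mu * (p2 t * e1 - p1 t * e2)) / (p1 t ^ 2 + p2 t ^ 2).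
Proof.
  intros Hs. destruct mu as [a b].
  unfold dprim, Cdiv, Cinv, Cmult, Cplus, Copp, RtoC, Re, Im; cbn [fst snd].
  set (u := p1 t) in *. set (v := p2 t) in *.
  replace ((u * u - v * v) ^ 2 + (u * v + v * u) ^ 2) with ((u ^ 2 + v ^ 2) ^ 2) by ring.
  field. exact Hs.
Qed.

Lemma is_derive_chart_h mu c : p1 t <> 0 ->
  is_derive (fun s => chart_h mu c (p1 s, p2 s)) t (Re (dprim mu (p1 t, p2 t) * (e1, e2))).
Proof.
  intros Hu. pose proof (sum_sq_pos_l (p1 t) (p2 t) Hu).
  rewrite dprim_Re by lra. unfold chart_h, prim0; cbn [fst snd].
  auto_derive.
  - repeat split; try (eexists; eassumption); lra.
  - rewrite Dp1, Dp2. field. repeat split; try exact Hu; nra.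
Qed.

Lemma is_derive_chart_v mu c : p2 t <> 0 ->
  is_derive (fun s => chart_v mu c (p1 s, p2 s)) t (Re (dprim mu (p1 t, p2 t) * (e1, e2))).
Proof.
  intros Hv. pose proof (sum_sq_pos_r (p1 t) (p2 t) Hv).
  rewrite dprim_Re by lra. unfold chart_v, prim0; cbn [fst snd].
  auto_derive.
  - repeat split; try (eexists; eassumption); lra.
  - rewrite Dp1, Dp2. field. repeat split; try exact Hv; nra.
Qed.

Lemma is_derive_path_local (W : C -> Prop) (F G : C -> R) l :
  open W -> W (p1 t, p2 t) -> (forall w, W w -> F w = G w) ->
  is_derive (fun s => G (p1 s, p2 s)) t l -> is_derive (fun s => F (p1 s, p2 s)) t l.
Proof.
  intros HW Wt HFG. apply is_derive_ext_loc.
  generalize (locally_path W p1 p2 t e1 e2 H1 H2 HW Wt). apply filter_imp.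
  intros s Ws. symmetry. auto.
Qed.

End PathDerivative.

Definition path_derivative (U : C -> Prop) (F : C -> R) (L : C -> C -> R) : Prop :=
  forall (p1 p2 : R -> R) (t e1 e2 : R), is_derive p1 t e1 -> is_derive p2 t e2 ->
    U (p1 t, p2 t) -> is_derive (fun s => F (p1 s, p2 s)) t (L (p1 t, p2 t) (e1, e2)).

Definition glued_rate (mu w : C) : R :=
  if Rlt_dec 0 (snd w) then Derive (slide (2 * PI * Im mu)) (chart_v mu (PI / 2) w) else 1.

Lemma glued_rate_ge mu w : 1 / 2 <= glued_rate mu w.
Proof.
  unfold glued_rate. destruct (Rlt_dec 0 (snd w)); [|lra].
  destruct (slide_derive (2 * PI * Im mu) (chart_v mu (PI / 2) w)) as [d [Hd Hd2]].
  rewrite (is_derive_unique _ _ _ Hd). exact Hd2.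
Qed.

Section ChartSmoothness.
Variables (n : nat) (U : C -> Prop) (F1 F2 : C -> R).
Hypothesis HU : open U.
Hypothesis HF1 : Ck n U F1.
Hypothesis HF2 : Ck n U F2.

Lemma Ck_prim0 mu :
  (forall y, U y -> 0 < F1 y ^ 2 + F2 y ^ 2) -> Ck n U (fun y => prim0 mu (F1 y, F2 y)).
Proof.
  intros Hp. unfold prim0; cbn [fst snd].
  assert (HS : Ck n U (fun y => F1 y ^ 2 + F2 y ^ 2)).
  { apply Ck_plus; auto;
      [apply (Ck_ext _ _ _ (fun y => F1 y * F1 y))|apply (Ck_ext _ _ _ (fun y => F2 y * F2 y))];
      auto using Ck_mult; intros y _; ring. }
  apply Ck_minus, Ck_scal, Ck_ln; auto.
  unfold Rdiv. apply Ck_mult, Ck_inv; auto. intros y Hy. specialize (Hp y Hy). lra.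
Qed.

Lemma Ck_chart_h mu c : (forall y, U y -> F1 y <> 0) -> Ck n U (fun y => chart_h mu c (F1 y, F2 y)).
Proof.
  intros Hn. unfold chart_h. apply Ck_plus; auto.
  - apply Ck_prim0. intros y Hy. apply sum_sq_pos_l; auto.
  - cbn [fst snd]. unfold Rdiv. apply Ck_scal, Ck_plus, Ck_atan, Ck_mult, Ck_inv; auto using Ck_const.
Qed.

Lemma Ck_chart_v mu c : (forall y, U y -> F2 y <> 0) -> Ck n U (fun y => chart_v mu c (F1 y, F2 y)).
Proof.
  intros Hn. unfold chart_v. apply Ck_plus; auto.
  - apply Ck_prim0. intros y Hy. apply sum_sq_pos_r; auto.
  - cbn [fst snd]. unfold Rdiv. apply Ck_scal, Ck_minus, Ck_atan, Ck_mult, Ck_inv; auto using Ck_const.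
Qed.

Lemma Ck_local_chart (W : C -> Prop) (F G : C -> R) y :
  open W -> (forall w, W w -> F w = G w) ->
  (forall V : C -> Prop, open V -> Ck n V F1 -> Ck n V F2 -> (forall z, V z -> W (F1 z, F2 z)) ->
     Ck n V (fun z => G (F1 z, F2 z))) ->
  U y -> W (F1 y, F2 y) -> exists V : C -> Prop, V y /\ Ck n V (fun z => F (F1 z, F2 z)).
Proof.
  intros HW HFG HG Uy Wy. set (V := fun z => U z /\ W (F1 z, F2 z)).
  assert (HV : open V).
  { apply open_preimage_pair; auto; intros z Hz; eapply Ck_continuous; eauto. }
  assert (HVU : forall z, V z -> U z) by (intros z [Uz _]; exact Uz).
  exists V. split; [split; auto|].
  apply (Ck_ext _ _ _ (fun z => G (F1 z, F2 z))); [exact HV|intros z [_ Wz]; auto|].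
  apply HG; [exact HV|apply (Ck_subset _ U)|apply (Ck_subset _ U)|intros z [_ Wz]]; auto.
Qed.

End ChartSmoothness.

(** * Powers, submersions and first integrals *)

Lemma Ck_Cpow N n U : open U -> Ck n U (fun y => fst (Cpow y N)) /\ Ck n U (fun y => snd (Cpow y N)).
Proof.
  intros HU. induction N as [|N [IH1 IH2]]; [simpl; split; apply Ck_const; auto|].
  split.
  - apply (Ck_ext _ _ _ (fun y => fst y * fst (Cpow y N) - snd y * snd (Cpow y N))); auto.
    apply Ck_minus; auto using Ck_mult, Ck_fst, Ck_snd.
  - apply (Ck_ext _ _ _ (fun y => fst y * snd (Cpow y N) + snd y * fst (Cpow y N))); auto.
    apply Ck_plus; auto using Ck_mult, Ck_fst, Ck_snd.
Qed.

Definition dCpow (N : nat) (c d : C) : C := (INR N * Cpow c (pred N) * d)%C.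

Lemma dCpow_S N c d : (d * Cpow c N + c * dCpow N c d)%C = dCpow (S N) c d.
Proof.
  unfold dCpow. destruct N as [|N]; [unfold RtoC, Cmult, Cplus; simpl; f_equal; ring|].
  rewrite (S_INR (S N)), RtoC_plus. simpl pred. simpl Cpow. ring.
Qed.

Lemma is_derive_Cpow N (p1 p2 : R -> R) t e1 e2 : is_derive p1 t e1 -> is_derive p2 t e2 ->
  is_derive (fun s => fst (Cpow (p1 s, p2 s) N)) t (fst (dCpow N (p1 t, p2 t) (e1, e2))) /\
  is_derive (fun s => snd (Cpow (p1 s, p2 s) N)) t (snd (dCpow N (p1 t, p2 t) (e1, e2))).
Proof.
  intros H1 H2. induction N as [|N [A B]].
  - replace (dCpow 0 (p1 t, p2 t) (e1, e2)) with (RtoC 0) by (unfold dCpow; simpl INR; ring).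
    split; apply is_derive_Reals, derivable_pt_lim_const.
  - rewrite <- dCpow_S. set (D := dCpow N (p1 t, p2 t) (e1, e2)) in *. simpl Cpow.
    set (P1 := fun s => fst (Cpow (p1 s, p2 s) N)) in *.
    set (P2 := fun s => snd (Cpow (p1 s, p2 s) N)) in *.
    split.
    + replace (fst _) with (e1 * P1 t + p1 t * fst D - (e2 * P2 t + p2 t * snd D))
        by (unfold P1, P2; cbn [fst snd Cmult Cplus]; ring).
      apply (is_derive_minus (fun s => p1 s * P1 s) (fun s => p2 s * P2 s));
        apply Derive.is_derive_mult; auto.
    + replace (snd _) with (e1 * P2 t + p1 t * snd D + (e2 * P1 t + p2 t * fst D))
        by (unfold P1, P2; cbn [fst snd Cmult Cplus]; ring).
      apply (is_derive_plus (fun s => p1 s * P2 s) (fun s => p2 s * P1 s));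
        apply Derive.is_derive_mult; auto.
Qed.

Lemma path_derivative_Cpow N (U V : C -> Prop) F L :
  (forall y, U y -> V (Cpow y N)) -> path_derivative V F L ->
  path_derivative U (fun y => F (Cpow y N)) (fun y d => L (Cpow y N) (dCpow N y d)).
Proof.
  intros HUV HL p1 p2 t e1 e2 H1 H2 Ht.
  destruct (is_derive_Cpow N p1 p2 t e1 e2 H1 H2) as [A B].
  generalize (HL _ _ _ _ _ A B). rewrite <- !surjective_pairing. intros HF.
  apply (is_derive_ext (fun s => F (fst (Cpow (p1 s, p2 s) N), snd (Cpow (p1 s, p2 s) N)))).
  - intros s. rewrite <- surjective_pairing. reflexivity.
  - apply HF, HUV, Ht.
Qed.

Lemma submersion_of_path_derivative U F L : smooth_on U F -> path_derivative U F L ->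
  (forall y, U y -> (L y (1, 0), L y (0, 1)) <> (0, 0)) -> submersion_on U F.
Proof.
  intros HF HL HL0. split; [exact HF|]. intros y Hy.
  assert (Uy : U (fst y, snd y)) by (rewrite <- surjective_pairing; exact Hy).
  assert (Did : forall x, is_derive (fun s : R => s) x 1)
    by (intros; apply is_derive_Reals, derivable_pt_lim_id).
  assert (Dcst : forall c x, is_derive (fun _ : R => c) x 0)
    by (intros; apply is_derive_Reals, derivable_pt_lim_const).
  pose proof (HL (fun s => s) (fun _ => snd y) (fst y) 1 0 (Did _) (Dcst _ _) Uy) as D1.
  pose proof (HL (fun _ => fst y) (fun s => s) (snd y) 0 1 (Dcst _ _) (Did _) Uy) as D2.
  replace (d1 F y) with (L (fst y, snd y) (1, 0)) by (symmetry; apply is_derive_unique, D1).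
  replace (d2 F y) with (L (fst y, snd y) (0, 1)) by (symmetry; apply is_derive_unique, D2).
  rewrite <- surjective_pairing. apply HL0, Hy.
Qed.

Lemma first_integral_of_path_derivative U omega F L : path_derivative U F L ->
  (forall w d, U w -> omega w d = 0 -> L w d = 0) -> first_integral U omega F.
Proof.
  intros HL Hker a b g1 g2 Hab Hpath.
  assert (D : forall t, a <= t <= b -> is_derive (fun s => F (g1 s, g2 s)) t 0).
  { intros t Ht. destruct (Hpath t Ht) as [Ut [E1 [E2 Hom]]].
    rewrite <- (Hker _ _ Ut Hom).
    exact (HL _ _ _ _ _ (Derive_correct _ _ E1) (Derive_correct _ _ E2) Ut). }
  destruct (MVT_gen (fun s => F (g1 s, g2 s)) a b (fun _ => 0)) as [c [_ Hc]];
    rewrite ?Rmin_left, ?Rmax_right by lra.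
  - intros x Hx. apply D. lra.
  - intros x Hx. apply continuity_pt_filterlim.
    apply (ex_derive_continuous (K := R_AbsRing) (V := R_NormedModule)). eexists. apply D. lra.
  - cbv beta in Hc. lra.
Qed.

Lemma Re_form_neq0 (l : R) (z : C) : l <> 0 -> z <> 0%C ->
  (l * Re (z * (1, 0)), l * Re (z * (0, 1))) <> (0, 0).
Proof.
  intros Hl Hz E. injection E as E1 E2. apply Hz.
  destruct z as [u v]. unfold Re, Cmult in E1, E2; cbn [fst snd] in E1, E2.
  apply Rmult_integral in E1, E2. destruct E1 as [E1|E1], E2 as [E2|E2]; try contradiction.
  unfold RtoC. f_equal; lra.
Qed.

Lemma dprim_neq0 (mu w : C) : w <> 0%C -> Cmod mu * Cmod w < 1 -> dprim mu w <> 0%C.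
Proof.
  intros Hw Hm E. unfold dprim in E.
  assert (E' : (mu * w)%C = (- RtoC 1)%C).
  { assert (H0 : (- (1 + mu * w))%C = RtoC 0) by (rewrite <- (Cmult_0_l (w * w)), <- E; field; auto).
    replace (mu * w)%C with (- (- (1 + mu * w)) - 1)%C by ring. rewrite H0. ring. }
  apply (f_equal Cmod) in E'. rewrite Cmod_mult, Cmod_opp, Cmod_1 in E'. lra.
Qed.

Lemma dprim_dCpow mu q k (y d : C) : y <> 0%C -> (1 <= q * k)%nat ->
  (dprim mu (Cpow y (q * k)) * dCpow (q * k) y d)%C =
  (RtoC (- INR k) * ((mu * INR q / y + INR q / Cpow y (q * k + 1)) * d))%C.
Proof.
  intros Hy HN. unfold dprim, dCpow. rewrite mult_INR, RtoC_mult, RtoC_opp.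
  destruct (q * k)%nat as [|M]; [lia|].
  replace (S M + 1)%nat with (S (S M)) by lia. simpl pred. simpl Cpow.
  pose proof (Cpow_nz y M Hy). field. auto.
Qed.

Lemma pow_le_base x N : 0 <= x <= 1 -> (1 <= N)%nat -> x ^ N <= x.
Proof.
  intros Hx HN. destruct N as [|M]; [lia|].
  assert (x ^ M <= 1) by (rewrite <- (pow1 M); apply pow_incr; lra).
  rewrite <- tech_pow_Rmult. nra.
Qed.

Lemma punct_disc_Cpow rho N (y : C) : rho <= 1 -> (1 <= N)%nat ->
  punct_disc rho y -> punct_disc rho (Cpow y N).
Proof.
  intros Hrho HN [Hy0 Hy1]. unfold punct_disc. rewrite Cmod_pow.
  split; [apply pow_lt; exact Hy0|].
  apply (Rle_lt_trans _ (Cmod y)); [apply pow_le_base; [lra|exact HN]|exact Hy1].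
Qed.

(** * The glued first integral *)

Lemma ln_inv_le a x : 0 < x -> Rabs a * ln (/ x) <= / (4 * x) + Rabs a * (4 * Rabs a + 1).
Proof.
  intros Hx. set (K := 4 * Rabs a + 1). pose proof (Rabs_pos a).
  assert (HK : 0 < K) by (unfold K; lra).
  assert (E : ln (/ x) = ln (/ (K * x)) + ln K).
  { rewrite <- ln_mult; [f_equal; field; split; lra|apply Rinv_0_lt_compat; nra|exact HK]. }
  pose proof (exp_ineq1_le (ln (/ (K * x)))) as L1. pose proof (exp_ineq1_le (ln K)) as L2.
  rewrite exp_ln in L1 by (apply Rinv_0_lt_compat; nra). rewrite exp_ln in L2 by exact HK.
  assert (Rabs a * ln (/ x) <= Rabs a * (/ (K * x) + K)) by (apply Rmult_le_compat_l; lra).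
  assert (Rabs a * / (K * x) <= / (4 * x)).
  { apply (Rmult_le_reg_r (4 * K * x)); [nra|].
    replace (Rabs a * / (K * x) * (4 * K * x)) with (4 * Rabs a) by (field; split; lra).
    replace (/ (4 * x) * (4 * K * x)) with K by (field; lra). unfold K; lra. }
  nra.
Qed.

Lemma Rabs_ln_sector u v : u <> 0 -> v ^ 2 < u ^ 2 -> u ^ 2 + v ^ 2 < 1 ->
  Rabs (ln (u ^ 2 + v ^ 2)) <= 2 * ln (/ Rabs u).
Proof.
  intros Hu Hv Hs. assert (Hu2 : 0 < u ^ 2) by (apply pow2_gt_0; auto).
  assert (ln (u ^ 2 + v ^ 2) < 0) by (rewrite <- ln_1; apply ln_increasing; nra).
  assert (ln (u ^ 2) <= ln (u ^ 2 + v ^ 2)) by (apply ln_le; [exact Hu2|pose proof (pow2_ge_0 v); lra]).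
  assert (ln (u ^ 2) = - 2 * ln (/ Rabs u)).
  { rewrite ln_Rinv, <- (pow2_abs u), ln_pow by (apply Rabs_pos_lt; auto). simpl; ring. }
  rewrite Rabs_left by auto. lra.
Qed.

Lemma prim0_sector mu u v : u <> 0 -> Rabs v < Rabs u -> u ^ 2 + v ^ 2 < 1 ->
  Rabs (prim0 mu (u, v) - u / (u ^ 2 + v ^ 2))
  <= / (4 * Rabs u) + Rabs (Re mu) * (4 * Rabs (Re mu) + 1).
Proof.
  intros Hu Hv Hs.
  assert (Hv2 : v ^ 2 < u ^ 2)
    by (rewrite <- (pow2_abs v), <- (pow2_abs u); pose proof (Rabs_pos v); nra).
  pose proof (Rabs_ln_sector u v Hu Hv2 Hs). pose proof (ln_inv_le (Re mu) (Rabs u) (Rabs_pos_lt u Hu)).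
  unfold prim0; cbn [fst snd].
  replace (u / (u ^ 2 + v ^ 2) - Re mu / 2 * ln (u ^ 2 + v ^ 2) - u / (u ^ 2 + v ^ 2))
    with (- (Re mu / 2 * ln (u ^ 2 + v ^ 2))) by ring.
  rewrite Rabs_Ropp, Rabs_mult. unfold Rdiv. rewrite Rabs_mult, (Rabs_pos_eq (/ 2)) by lra.
  pose proof (Rabs_pos (Re mu)). nra.
Qed.

Lemma inv_sector u v : 0 < u -> Rabs v < u -> / (2 * u) <= u / (u ^ 2 + v ^ 2).
Proof.
  intros Hu Hv. assert (Hv2 : v ^ 2 < u ^ 2) by (rewrite <- (pow2_abs v); pose proof (Rabs_pos v); nra).
  assert (Hs : 0 < u ^ 2 + v ^ 2) by (pose proof (pow2_ge_0 v); nra).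
  apply (Rmult_le_reg_r (2 * u * (u ^ 2 + v ^ 2))); [nra|].
  replace (/ (2 * u) * (2 * u * (u ^ 2 + v ^ 2))) with (u ^ 2 + v ^ 2) by (field; lra).
  replace (u / (u ^ 2 + v ^ 2) * (2 * u * (u ^ 2 + v ^ 2))) with (2 * u ^ 2) by (field; lra). lra.
Qed.

(* [4 rho radius_bound mu <= 1] makes [1 / (4 |u|)] dominate all other terms of the charts in
   the sectors of radius [rho], and gives [|mu w| < 1] on the disc, so that [dprim] does not
   vanish there. *)
Definition radius_bound (mu : C) : R :=
  slide_radius (2 * PI * Im mu) + Rabs (Re mu) * (4 * Rabs (Re mu) + 1) + 2 * PI * Rabs (Im mu)
  + Cmod mu.

Lemma radius_bound_ge1 mu : 1 <= radius_bound mu.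
Proof.
  unfold radius_bound. pose proof (slide_radius_ge1 (2 * PI * Im mu)).
  pose proof (Rabs_pos (Re mu)). pose proof (Rabs_pos (Im mu)). pose proof (Cmod_ge_0 mu).
  pose proof PI_RGT_0. assert (0 <= PI * Rabs (Im mu)) by (apply Rmult_le_pos; lra). nra.
Qed.

Lemma Cmod_le_radius_bound mu : Cmod mu <= radius_bound mu.
Proof.
  unfold radius_bound. pose proof (slide_radius_ge1 (2 * PI * Im mu)).
  pose proof (Rabs_pos (Re mu)). pose proof (Rabs_pos (Im mu)). pose proof PI_RGT_0.
  assert (0 <= PI * Rabs (Im mu)) by (apply Rmult_le_pos; lra). nra.
Qed.

Section GluedIntegral.
Variables (mu : C) (rho : R).
Hypothesis rho_pos : 0 < rho.
Hypothesis rho_small : 4 * rho * radius_bound mu <= 1.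

Lemma radius_bound_le_inv x : 0 < x < rho -> radius_bound mu <= / (4 * x).
Proof.
  intros Hx. pose proof (radius_bound_ge1 mu).
  apply (Rmult_le_reg_r (4 * x)); [lra|]. rewrite Rinv_l by lra. nra.
Qed.

Lemma rho_le_quarter : rho <= / 4.
Proof. pose proof (radius_bound_ge1 mu). apply (Rmult_le_reg_r 4); [lra|]. rewrite Rinv_l; nra. Qed.

Lemma Cmod_mul_lt1 w : punct_disc rho w -> Cmod mu * Cmod w < 1.
Proof.
  intros [_ Hw]. pose proof (Cmod_ge_0 mu). pose proof (Cmod_le_radius_bound mu).
  pose proof (radius_bound_ge1 mu). nra.
Qed.

Lemma right_sector_small u v : right_sector rho (u, v) -> u ^ 2 + v ^ 2 < 1.
Proof.
  unfold right_sector; cbn [fst snd]; intros [Hv Hu]. pose proof rho_le_quarter.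
  rewrite <- (pow2_abs v). pose proof (Rabs_pos v). nra.
Qed.

Lemma chart_h_right_large w : right_sector rho w -> slide_radius (2 * PI * Im mu) <= chart_h mu 0 w.
Proof.
  destruct w as [u v]. intros Hw. pose proof (right_sector_small u v Hw) as Hs.
  (* [Re (1/w) >= 1/(2u)], while the logarithmic term is at most [1/(4u)] plus a constant. *)
  unfold right_sector in Hw; simpl in Hw. destruct Hw as [Hv Hu].
  assert (Hu0 : 0 < u) by (pose proof (Rabs_pos v); lra).
  pose proof (prim0_sector mu u v (Rgt_not_eq _ _ Hu0) ltac:(rewrite (Rabs_pos_eq u); lra) Hs) as P.
  rewrite (Rabs_pos_eq u) in P by lra. apply Rabs_le_between in P.
  pose proof (inv_sector u v Hu0 Hv). pose proof (radius_bound_le_inv u ltac:(lra)).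
  assert (/ (2 * u) = 2 * / (4 * u)) by (field; lra).
  assert (Hat : Rabs (Im mu * (0 + atan (v / u))) <= PI * Rabs (Im mu)).
  { rewrite Rplus_0_l, Rabs_mult. pose proof (atan_bound (v / u)). pose proof PI_RGT_0.
    assert (Rabs (atan (v / u)) <= PI) by (apply Rabs_le; lra).
    rewrite (Rmult_comm PI). apply Rmult_le_compat_l; auto using Rabs_pos. }
  apply Rabs_le_between in Hat. unfold chart_h; cbn [fst snd]. unfold radius_bound in *.
  pose proof (Cmod_ge_0 mu). pose proof (Rabs_pos (Im mu)). pose proof PI_RGT_0.
  assert (0 <= PI * Rabs (Im mu)) by (apply Rmult_le_pos; lra). lra.
Qed.

Lemma chart_h_left_small w : left_sector rho w -> chart_h mu PI w <= - slide_radius (2 * PI * Im mu).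
Proof.
  destruct w as [u v]. intros Hw.
  assert (Hs : u ^ 2 + v ^ 2 < 1).
  { replace (u ^ 2) with ((- u) ^ 2) by ring. apply right_sector_small. exact Hw. }
  unfold left_sector in Hw; simpl in Hw. destruct Hw as [Hv Hu].
  assert (Hu0 : u < 0) by (pose proof (Rabs_pos v); lra).
  pose proof (prim0_sector mu u v (Rlt_not_eq _ _ Hu0) ltac:(rewrite (Rabs_left u); lra) Hs) as P.
  rewrite (Rabs_left u) in P by lra. apply Rabs_le_between in P.
  pose proof (inv_sector (- u) v ltac:(lra) Hv). pose proof (radius_bound_le_inv (- u) ltac:(lra)).
  replace ((- u) ^ 2) with (u ^ 2) in * by ring.
  assert (- u / (u ^ 2 + v ^ 2) = - (u / (u ^ 2 + v ^ 2))) by (unfold Rdiv; ring).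
  assert (/ (2 * - u) = 2 * / (4 * - u)) by (field; lra).
  assert (Hat : Rabs (Im mu * (PI + atan (v / u))) <= 2 * PI * Rabs (Im mu)).
  { rewrite Rabs_mult. pose proof (atan_bound (v / u)). pose proof PI_RGT_0.
    assert (Rabs (PI + atan (v / u)) <= 2 * PI) by (apply Rabs_le; lra).
    replace (2 * PI * Rabs (Im mu)) with (Rabs (Im mu) * (2 * PI)) by ring.
    apply Rmult_le_compat_l; auto using Rabs_pos. }
  apply Rabs_le_between in Hat. unfold chart_h; cbn [fst snd]. unfold radius_bound in *.
  pose proof (Cmod_ge_0 mu). pose proof (Rabs_pos (Im mu)). pose proof PI_RGT_0.
  assert (0 <= PI * Rabs (Im mu)) by (apply Rmult_le_pos; lra). lra.
Qed.

Lemma glued_right w : right_sector rho w -> glued mu w = chart_h mu 0 w.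
Proof.
  intros Hw. pose proof Hw as [Hv Hu]. pose proof (Rabs_pos (snd w)).
  unfold glued. destruct (Rlt_dec (snd w) 0) as [Hn|Hn]; [|destruct (Rlt_dec 0 (snd w)) as [Hp|Hp]].
  - rewrite chart_v_opp_sign by nra. f_equal. ring.
  - rewrite chart_v_same_sign by nra. replace (PI / 2 - PI / 2) with 0 by ring.
    apply slide_right, chart_h_right_large, Hw.
  - destruct (Rlt_dec 0 (fst w)); [reflexivity|lra].
Qed.

Lemma glued_left w : left_sector rho w -> glued mu w = chart_h mu (- PI) w.
Proof.
  intros Hw. pose proof Hw as [Hv Hu]. pose proof (Rabs_pos (snd w)).
  unfold glued. destruct (Rlt_dec (snd w) 0) as [Hn|Hn]; [|destruct (Rlt_dec 0 (snd w)) as [Hp|Hp]].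
  - rewrite chart_v_same_sign by nra. f_equal. field.
  - rewrite chart_v_opp_sign by nra. replace (PI / 2 + PI / 2) with PI by field.
    rewrite slide_left by (apply chart_h_left_small, Hw). unfold chart_h. ring.
  - destruct (Rlt_dec 0 (fst w)); [lra|reflexivity].
Qed.

Lemma path_derivative_glued :
  path_derivative (punct_disc rho) (glued mu) (fun w d => glued_rate mu w * Re (dprim mu w * d)).
Proof.
  intros p1 p2 t e1 e2 H1 H2 Hw.
  unfold glued_rate; cbn [fst snd].
  destruct (Rlt_dec 0 (p2 t)) as [Hp|Hp]; [|rewrite Rmult_1_l; destruct (Rlt_dec (p2 t) 0) as [Hn|Hn]].
  - apply (is_derive_path_local p1 p2 t e1 e2 H1 H2 _ _ _ _ open_upper_half Hp (glued_upper mu)).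
    rewrite (Rmult_comm (Derive _ _)).
    apply (is_derive_comp (slide _) (fun s => chart_v mu (PI / 2) (p1 s, p2 s))).
    + destruct (slide_derive (2 * PI * Im mu) (chart_v mu (PI / 2) (p1 t, p2 t))) as [d [Hd _]].
      rewrite (is_derive_unique _ _ _ Hd). exact Hd.
    + apply is_derive_chart_v; auto. lra.
  - apply (is_derive_path_local p1 p2 t e1 e2 H1 H2 _ _ _ _ open_lower_half Hn (glued_lower mu)).
    apply is_derive_chart_v; auto. lra.
  - assert (H0 : p2 t = 0) by lra.
    destruct (real_axis_in_sectors rho _ Hw H0) as [Hr|Hl].
    + apply (is_derive_path_local p1 p2 t e1 e2 H1 H2 _ _ _ _ (open_right_sector rho) Hr
               glued_right).
      apply is_derive_chart_h; auto. destruct Hr as [A B]; cbn [fst snd] in *.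
      pose proof (Rabs_pos (p2 t)). lra.
    + apply (is_derive_path_local p1 p2 t e1 e2 H1 H2 _ _ _ _ (open_left_sector rho) Hl
               glued_left).
      apply is_derive_chart_h; auto. destruct Hl as [A B]; cbn [fst snd] in *.
      pose proof (Rabs_pos (p2 t)). lra.
Qed.

Lemma Ck_glued n U F1 F2 :
  open U -> Ck n U F1 -> Ck n U F2 -> (forall y, U y -> punct_disc rho (F1 y, F2 y)) ->
  Ck n U (fun y => glued mu (F1 y, F2 y)).
Proof.
  intros HU HF1 HF2 Hdisc. apply Ck_local. intros y Hy.
  destruct (Rlt_dec 0 (F2 y)) as [Hp|Hp]; [|destruct (Rlt_dec (F2 y) 0) as [Hn|Hn]].
  - apply (Ck_local_chart n U F1 F2 HU HF1 HF2 _ _ _ y open_upper_half (glued_upper mu)); auto.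
    intros V HV HV1 HV2 HVW. apply Ck_slide, Ck_chart_v; auto.
    intros z Hz. apply Rgt_not_eq, HVW, Hz.
  - apply (Ck_local_chart n U F1 F2 HU HF1 HF2 _ _ _ y open_lower_half (glued_lower mu)); auto.
    intros V HV HV1 HV2 HVW. apply Ck_chart_v; auto.
    intros z Hz. apply Rlt_not_eq, HVW, Hz.
  - destruct (real_axis_in_sectors rho _ (Hdisc y Hy) ltac:(cbn [snd]; lra)) as [Hr|Hl].
    + apply (Ck_local_chart n U F1 F2 HU HF1 HF2 _ _ _ y (open_right_sector rho) glued_right); auto.
      intros V HV HV1 HV2 HVW. apply Ck_chart_h; auto.
      intros z Hz. destruct (HVW z Hz) as [A B]; cbn [fst snd] in *.
      pose proof (Rabs_pos (F2 z)). apply Rgt_not_eq. lra.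
    + apply (Ck_local_chart n U F1 F2 HU HF1 HF2 _ _ _ y (open_left_sector rho) glued_left); auto.
      intros V HV HV1 HV2 HVW. apply Ck_chart_h; auto.
      intros z Hz. destruct (HVW z Hz) as [A B]; cbn [fst snd] in *.
      pose proof (Rabs_pos (F2 z)). apply Rlt_not_eq. lra.
Qed.

Lemma glued_submersion : submersion_on (punct_disc rho) (glued mu).
Proof.
  apply submersion_of_path_derivative with (L := fun w d => glued_rate mu w * Re (dprim mu w * d));
    [|apply path_derivative_glued|].
  - intros n. apply (Ck_ext _ _ _ (fun w => glued mu (fst w, snd w)));
      [apply open_punct_disc, rho_pos|intros w _; rewrite <- surjective_pairing; reflexivity|].
    apply (Ck_glued n); auto using open_punct_disc, Ck_fst, Ck_snd.
  - intros w Hw. pose proof (glued_rate_ge mu w). apply Re_form_neq0; [lra|].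
    apply dprim_neq0; [apply Cmod_gt_0, Hw|apply Cmod_mul_lt1, Hw].
Qed.

Lemma glued_Cpow_submersion N : (1 <= N)%nat ->
  submersion_on (punct_disc rho) (fun y => glued mu (Cpow y N)).
Proof.
  intros HN. pose proof rho_le_quarter.
  assert (Hdisc : forall y, punct_disc rho y -> punct_disc rho (Cpow y N))
    by (intros y Hy; apply punct_disc_Cpow; auto; lra).
  eapply submersion_of_path_derivative;
    [|apply (path_derivative_Cpow N _ _ _ _ Hdisc path_derivative_glued)|].
  - intros n. destruct (Ck_Cpow N n _ (open_punct_disc rho rho_pos)) as [C1 C2].
    apply (Ck_ext _ _ _ (fun y => glued mu (fst (Cpow y N), snd (Cpow y N))));
      [apply open_punct_disc, rho_pos|intros y _; rewrite <- surjective_pairing; reflexivity|].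
    apply (Ck_glued n); auto using open_punct_disc.
  - intros y Hy. pose proof (glued_rate_ge mu (Cpow y N)).
    assert (Hy0 : y <> 0%C) by apply Cmod_gt_0, Hy.
    unfold dCpow. rewrite !Cmult_assoc. apply Re_form_neq0; [lra|].
    apply Cmult_neq_0; [apply Cmult_neq_0|apply Cpow_nz, Hy0].
    + apply dprim_neq0; [apply Cpow_nz, Hy0|apply Cmod_mul_lt1, Hdisc, Hy].
    + intros E. apply (f_equal Re) in E. apply (not_0_INR N); [lia|exact E].
Qed.

Lemma glued_Cpow_first_integral q k : (0 < q)%nat -> (1 <= k)%nat ->
  first_integral (punct_disc rho) (omega1 q k mu) (fun y => glued mu (Cpow y (q * k))).
Proof.
  intros Hq Hk. assert (HN : (1 <= q * k)%nat) by nia. pose proof rho_le_quarter.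
  assert (Hdisc : forall y, punct_disc rho y -> punct_disc rho (Cpow y (q * k)))
    by (intros y Hy; apply punct_disc_Cpow; auto; lra).
  apply (first_integral_of_path_derivative _ _ _ _
           (path_derivative_Cpow _ _ _ _ _ Hdisc path_derivative_glued)).
  intros y d Hy Hom. cbv beta.
  rewrite dprim_dCpow by (auto; apply Cmod_gt_0, Hy).
  unfold omega1 in Hom. rewrite re_scal_l, Hom. ring.
Qed.

End GluedIntegral.

Theorem lemma4p7 (p q k : nat) (mu : C) :
  (0 < p)%nat -> (0 < q)%nat -> Nat.gcd p q = 1%nat -> (1 <= k)%nat ->
  exists r0 : R, 0 < r0 /\
    forall r : R, 0 < r <= r0 ->
      exists (f g : C -> R),
        submersion_on (punct_disc r) f /\
        first_integral (punct_disc r) (omega1 q k mu) f /\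
        submersion_on (punct_disc (r ^ (q * k))) g /\
        (forall y, punct_disc r y -> f y = g (Cpow y (q * k))).
Proof.
  intros _ Hq _ Hk.
  pose proof (radius_bound_ge1 mu) as HB.
  exists (/ (4 * radius_bound mu)). split; [apply Rinv_0_lt_compat; lra|].
  intros r [Hr Hr0].
  assert (Hsmall : forall rho, rho <= r -> 4 * rho * radius_bound mu <= 1).
  { intros rho Hrho. apply (Rle_trans _ (4 * / (4 * radius_bound mu) * radius_bound mu)); [nra|].
    right. field. lra. }
  assert (HN : (1 <= q * k)%nat) by nia.
  assert (HrN : 0 < r ^ (q * k) <= r).
  { split; [apply pow_lt, Hr|apply pow_le_base; [|exact HN]].
    pose proof (Hsmall r (Rle_refl r)). nra. }
  exists (fun y => glued mu (Cpow y (q * k))), (glued mu).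
  split; [|split; [|split]].
  - apply glued_Cpow_submersion; auto with real.
  - apply glued_Cpow_first_integral; auto with real.
  - apply glued_submersion; [apply HrN|apply Hsmall, HrN].
  - reflexivity.
Qed.
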